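(* Let $\mathfrak{X}$ be a dual polar scheme of diameter $d$ on the vertex set $X$, with base vertex $u_0$, and let $e\ge 0$ be an integer. Let $(Y,w)$ be a positively weighted subset of $X$ which is a relative $2e$-design with respect to $u_0$, i.e. \[ \sum_{i=1}^p\frac{w(Y_{r_i})}{k_{r_i}}\sum_{x\in X_{r_i}}f(x)=\sum_{y\in Y}w(y)f(y)\quad\text{for every } f\in\mathrm{Hom}_0(X)+\mathrm{Hom}_1(X)+\cdots+\mathrm{Hom}_{2e}(X), \] where $\{r_1,\dots,r_p\}=\{r: Y\cap X_r\ne\emptyset\}$. Let $S=X_{r_1}\cup\cdots\cup X_{r_p}$. Then \[ |Y|\ge\dim\big(\mathrm{Hom}_0(S)+\mathrm{Hom}_1(S)+\cdots+\mathrm{Hom}_e(S)\big). \]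
   Context: Dual polar scheme: $V$ is a finite-dimensional vector space over a finite field with a non-degenerate alternating, Hermitian, or quadratic form of Witt index $d$; $X$ is the set of maximal totally isotropic subspaces, with distance $\partial(x,y)=d-\dim(x\cap y)$ (the distance in the dual polar graph), and relations $R_r=\{(x,y):\partial(x,y)=r\}$. Shells $X_r=\{x:\partial(u_0,x)=r\}$, $k_r=|X_r|$. A weighted subset is $Y\subseteq X$ with $w:Y\to\mathbb{R}_{>0}$; $Y_{r}=Y\cap X_r$, $w(Y_r)=\sum_{y\in Y_r}w(y)$. For $z\in X$, $f_z(x)=1$ if $\partial(u_0,z)+\partial(z,x)=\partial(u_0,x)$ and $0$ otherwise; $\mathrm{Hom}_j(X)=\mathrm{span}\{f_z: z\in X_j\}$ (with $\mathrm{Hom}_j(X)=0$ for $j>d$), and $\mathrm{Hom}_j(S)=\{f|_S: f\in\mathrm{Hom}_j(X)\}$. *)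

From HB Require Import structures.
From mathcomp Require Import all_boot all_order all_algebra.
Set Implicit Arguments. Unset Strict Implicit. Unset Printing Implicit Defensive.
Import Order.TTheory GRing.Theory Num.Theory.
Local Open Scope ring_scope.

(* A form on V = 'rV[F]_n (row vectors), given by a Gram matrix M:
   - AltForm M      : B(u,v) = u M v^T   (alternating bilinear)
   - HermForm s M   : B(u,v) = u M (v^s)^T  (Hermitian w.r.t. the involution s)
   - QuadForm M     : Q(v) = v M v^T      (quadratic form) *)
Inductive dpform (F : finFieldType) (n : nat) :=
| AltForm of 'M[F]_n
| HermForm of {rmorphism F -> F} & 'M[F]_n
| QuadForm of 'M[F]_n.

Section DualPolar.
Variables (F : finFieldType) (n : nat).

Definition quadval (M : 'M[F]_n) (v : 'rV[F]_n) : F := (v *m M *m v^T) 0 0.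

Definition nondeg_form (phi : dpform F n) : Prop :=
  match phi with
  | AltForm M => M^T = - M /\ (forall i, M i i = 0) /\ M \in unitmx
  | HermForm s M =>
      (forall x, s (s x) = x) /\ (exists x, s x != x) /\
      M^T = map_mx s M /\ M \in unitmx
  | QuadForm M =>
      (* non-singular: no nonzero singular vector in the radical of the polar form *)
      forall v : 'rV[F]_n, v != 0 -> quadval M v = 0 -> v *m (M + M^T) != 0
  end.

(* A subspace of V is represented by a matrix A whose row space it is. *)
Definition tiso (phi : dpform F n) (A : 'M[F]_n) : bool :=
  match phi with
  | AltForm M => A *m M *m A^T == 0
  | HermForm s M => A *m M *m (map_mx s A)^T == 0
  | QuadForm M => [forall v : 'rV[F]_n, (v <= A)%MS ==> (quadval M v == 0)]
  end.

Definition witt (phi : dpform F n) : nat := \max_(A : 'M[F]_n | tiso phi A) \rank A.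

(* vertex set X: maximal totally isotropic subspaces, each represented by its
   canonical matrix <<A>>%MS *)
Definition dpX (phi : dpform F n) : {set 'M[F]_n} :=
  [set A : 'M[F]_n | [&& (<<A>>%MS == A), tiso phi A &
     [forall B : 'M[F]_n, (tiso phi B && (A <= B)%MS) ==> (B <= A)%MS]]].

Definition dpdist (phi : dpform F n) (x y : 'M[F]_n) : nat :=
  (witt phi - \rank (x :&: y)%MS)%N.

Definition shell (phi : dpform F n) (u0 : 'M[F]_n) (r : nat) : {set 'M[F]_n} :=
  [set x in dpX phi | dpdist phi u0 x == r].

Variable R : realFieldType.

Definition fun_on := {ffun 'M[F]_n -> R^o}.

Definition fz (phi : dpform F n) (u0 z : 'M[F]_n) : fun_on :=
  [ffun x => if (x \in dpX phi) &&
                (dpdist phi u0 z + dpdist phi z x == dpdist phi u0 x)%N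
             then 1 else 0].

(* Hom_j(X) = span { f_z : z in X_j } (zero when X_j is empty, e.g. j > d) *)
Definition HomX (phi : dpform F n) (u0 : 'M[F]_n) (j : nat) : {vspace fun_on} :=
  <<[seq fz phi u0 z | z <- enum (shell phi u0 j)]>>%VS.

(* restriction to S, realised as the function vanishing outside S *)
Definition restr (S : {set 'M[F]_n}) (f : fun_on) : fun_on :=
  [ffun x => if x \in S then f x else 0].

(* Hom_j(S) = { f|_S : f in Hom_j(X) } = span of the restricted generators *)
Definition HomS (phi : dpform F n) (u0 : 'M[F]_n) (S : {set 'M[F]_n}) (j : nat)
  : {vspace fun_on} :=
  <<[seq restr S (fz phi u0 z) | z <- enum (shell phi u0 j)]>>%VS.

End DualPolar.

From HB Require Import structures.
From mathcomp Require Import all_boot all_order all_algebra ring zify.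
Set Implicit Arguments. Unset Strict Implicit. Unset Printing Implicit Defensive.
Import Order.TTheory GRing.Theory Num.Theory.
Local Open Scope ring_scope.

(* Write Hom_{<=j} for Hom_0(X) + ... + Hom_j(X). The product of two
   generators f_z, f_z' is a sum of generators f_z3 with
   d(u0,z3) = d - rank (u0 :&: z :&: z') <= d(u0,z) + d(u0,z'). Indeed, if
   x lies beyond both z and z' as seen from u0, exactly one such z3 lies
   beyond z and z' and before x, namely <<A + x :&: A^perp>> where
   A = u0 :&: z :&: z'. Hence h^2 lies in Hom_{<=2e} whenever h lies in
   Hom_{<=e}. If such an h vanishes on Y, the design identity for h^2 has a
   vanishing right-hand side, while its left-hand side is a positively
   weighted sum of the sums of h^2 over the shells met by Y; so h vanishes
   on S. Restriction to Y is therefore injective on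
   Hom_0(S) + ... + Hom_e(S), and the bound follows. *)

Lemma mx11_tr (R : Type) (P : 'M[R]_1) : P^T 0 0 = P 0 0.
Proof. by rewrite mxE. Qed.

Lemma mx11D (V : nmodType) (P Q : 'M[V]_1) : (P + Q) 0 0 = P 0 0 + Q 0 0.
Proof. by rewrite mxE. Qed.

Lemma rank_ge_sub (F : fieldType) m1 m2 n (A : 'M[F]_(m1, n)) (B : 'M[F]_(m2, n)) :
  (A <= B)%MS -> (\rank B <= \rank A)%N -> (B <= A)%MS.
Proof. by move=> sAB leBA; rewrite -(mxrank_leqif_sup sAB).2 eqn_leq mxrankS. Qed.

Lemma map_mx_idfun (R : nzRingType) m1 m2 (A : 'M[R]_(m1, m2)) :
  map_mx (idfun : {rmorphism R -> R}) A = A.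
Proof. exact: map_mx_id. Qed.

Lemma quadvalD (F : finFieldType) n (M : 'M[F]_n) (v w : 'rV[F]_n) :
  quadval M (v + w) = quadval M v + quadval M w + (v *m (M + M^T) *m w^T) 0 0.
Proof.
have wMv : (w *m M *m v^T) 0 0 = (v *m M^T *m w^T) 0 0.
  by rewrite -mx11_tr !trmx_mul trmxK mulmxA.
rewrite /quadval linearD /= !mulmxDl !mulmxDr !mx11D mulmxDl mx11D wMv.
ring.
Qed.

Lemma quadvalZ (F : finFieldType) n (M : 'M[F]_n) c (v : 'rV[F]_n) :
  quadval M (c *: v) = c * c * quadval M v.
Proof. by rewrite /quadval -!scalemxAl linearZ /= -scalemxAr !mxE mulrA. Qed.

Section DualPolarGeometry.
Variables (F : finFieldType) (n : nat) (phi : dpform F n).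
Hypothesis phi_nondeg : nondeg_form phi.

(* All three kinds of form are handled through one sesquilinear form
   [polar v w = v N (w^s)^T]: [s] is the field involution of a Hermitian form
   (the identity otherwise) and [N] is the Gram matrix, or [M + M^T] for the
   quadratic form [Q v = v M v^T], i.e. the Gram matrix of its polar form. *)
Definition form_aut : {rmorphism F -> F} :=
  match phi with HermForm s _ => s | _ => idfun end.

Definition polar_gram : 'M[F]_n :=
  match phi with AltForm M => M | HermForm _ M => M | QuadForm M => M + M^T end.

Definition polar (v w : 'rV[F]_n) : F :=
  (v *m polar_gram *m (map_mx form_aut w)^T) 0 0.

Lemma form_autK : involutive form_aut.
Proof. by rewrite /form_aut; case: phi phi_nondeg => // s M [sK _]. Qed.

Lemma map_mx_form_autK m1 m2 (A : 'M[F]_(m1, m2)) :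
  map_mx form_aut (map_mx form_aut A) = A.
Proof. by apply/matrixP => i j; rewrite !mxE form_autK. Qed.

Lemma polar_mulmx m1 m2 (A : 'M[F]_(m1, n)) (B : 'M[F]_(m2, n)) a b :
  polar (a *m A) (b *m B) =
  (a *m (A *m polar_gram *m (map_mx form_aut B)^T) *m (map_mx form_aut b)^T) 0 0.
Proof. by rewrite /polar map_mxM trmx_mul !mulmxA. Qed.

Lemma polar_row m1 m2 (A : 'M[F]_(m1, n)) (B : 'M[F]_(m2, n)) i j :
  (A *m polar_gram *m (map_mx form_aut B)^T) i j = polar (row i A) (row j B).
Proof.
rewrite /polar -row_mul map_row tr_row -mulmxA -row_mul colE mulmxA -colE !mxE.
by apply: eq_bigr => k _; rewrite !mxE.
Qed.

Lemma polar_orthoP m1 m2 (A : 'M[F]_(m1, n)) (B : 'M[F]_(m2, n)) :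
  reflect (forall v w, (v <= A)%MS -> (w <= B)%MS -> polar v w = 0)
          (A *m polar_gram *m (map_mx form_aut B)^T == 0).
Proof.
apply: (iffP eqP) => [AB0 v w /submxP[a ->] /submxP[b ->]|AB0].
  by rewrite polar_mulmx AB0 mulmx0 mul0mx mxE.
by apply/matrixP => i j; rewrite polar_row mxE AB0 ?row_sub.
Qed.

Lemma polarDl v1 v2 w : polar (v1 + v2) w = polar v1 w + polar v2 w.
Proof. by rewrite /polar !mulmxDl mxE. Qed.

Lemma polarDr v w1 w2 : polar v (w1 + w2) = polar v w1 + polar v w2.
Proof. by rewrite /polar map_mxD linearD /= mulmxDr mxE. Qed.

Lemma polarZl c v w : polar (c *: v) w = c * polar v w.
Proof. by rewrite /polar -!scalemxAl mxE. Qed.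

Lemma polarZr c v w : polar v (c *: w) = form_aut c * polar v w.
Proof. by rewrite /polar map_mxZ linearZ /= -scalemxAr mxE. Qed.

Lemma polar_sym0 v w : polar v w = 0 -> polar w v = 0.
Proof.
rewrite /polar /polar_gram /form_aut; case: phi phi_nondeg => [M|s M|M] /=.
- rewrite !map_mx_idfun => -[MT _] vw0.
  by rewrite -mx11_tr !trmx_mul trmxK MT mulNmx mulmxN mulmxA mxE vw0 oppr0.
- move=> [sK [_ [MT _]]] vw0.
  have map11 (P : 'M[F]_1) : s (P 0 0) = map_mx s P 0 0 by rewrite mxE.
  rewrite -(rmorph0 s) -vw0 -mx11_tr !trmx_mul trmxK MT map11 !map_mxM mulmxA.
  congr ((_ *m _) 0 0).
  by apply/matrixP => i j; rewrite !mxE sK.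
- move=> _; rewrite !map_mx_idfun => vw0.
  by rewrite -mx11_tr !trmx_mul trmxK linearD /= trmxK addrC mulmxA.
Qed.

Definition singular (v : 'rV[F]_n) : bool :=
  match phi with QuadForm M => quadval M v == 0 | _ => polar v v == 0 end.

Lemma singular_polar v : singular v -> polar v v = 0.
Proof.
rewrite /singular /polar /polar_gram /form_aut; case: phi => [M|s M|M] /=; try by move/eqP.
rewrite map_mx_idfun => /eqP Qv0.
have := quadvalD M v v; rewrite Qv0 -mulr2n -scaler_nat quadvalZ Qv0 mulr0.
by rewrite !add0r => <-.
Qed.

Lemma singular0 : singular 0.
Proof. by rewrite /singular /polar /quadval; case: phi => * /=; rewrite !mul0mx mxE. Qed.

Lemma singularZ c v : singular v -> singular (c *: v).
Proof.
move=> sv; have vv0 := singular_polar sv; move: vv0 sv; rewrite /singular.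
case: phi => [M|s M|M] /=; try by move=> vv0 _; rewrite polarZl polarZr vv0 !mulr0.
by move=> _ /eqP Qv0; rewrite quadvalZ Qv0 mulr0.
Qed.

Lemma singularD a b : singular a -> singular b -> polar a b = 0 -> singular (a + b).
Proof.
move=> sa sb ab0; have ba0 := polar_sym0 ab0.
have aa0 := singular_polar sa; have bb0 := singular_polar sb.
rewrite /singular; case E: phi => [M|s M|M] /=; last first.
  move: sa sb ab0; rewrite /singular /polar /polar_gram /form_aut E map_mx_idfun.
  by move=> /eqP Qa0 /eqP Qb0 ab0; rewrite quadvalD Qa0 Qb0 ab0 !addr0.
all: by rewrite polarDl !polarDr aa0 bb0 ab0 ba0 !addr0.
Qed.


Definition totally_singular m (A : 'M[F]_(m, n)) : Prop :=
  (forall v, (v <= A)%MS -> singular v) /\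
  (forall v w, (v <= A)%MS -> (w <= A)%MS -> polar v w = 0).

Lemma totally_singularS m1 m2 (A : 'M[F]_(m1, n)) (B : 'M[F]_(m2, n)) :
  (B <= A)%MS -> totally_singular A -> totally_singular B.
Proof.
move=> sBA [sA oA]; split=> [v vB|v w vB wB]; first exact/sA/(submx_trans vB).
by apply: oA; apply: submx_trans sBA.
Qed.

Lemma totally_singular_adds m1 m2 (A : 'M[F]_(m1, n)) (B : 'M[F]_(m2, n)) :
  totally_singular A -> totally_singular B ->
  (forall a b, (a <= A)%MS -> (b <= B)%MS -> polar a b = 0) ->
  totally_singular (A + B)%MS.
Proof.
move=> [sA oA] [sB oB] oAB.
have oAB' a b : (a <= A)%MS -> (b <= B)%MS -> polar b a = 0.
  by move=> aA bB; apply/polar_sym0/oAB.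
split=> [v|v w] /sub_addsmxP[[a b] -> /=]; last move=> /sub_addsmxP[[c d] -> /=].
  by apply: singularD; [apply/sA/submxMl|apply/sB/submxMl|apply/oAB/submxMl/submxMl].
rewrite !polarDl !polarDr (oA (a *m A)) ?(oAB (a *m A)) ?(oAB' (c *m A)) ?submxMl //.
by rewrite oB ?submxMl // !addr0.
Qed.

Lemma totally_singular_row (v : 'rV[F]_n) : singular v -> totally_singular v.
Proof.
move=> sv; split=> [w /sub_rVP[a ->]|w1 w2 /sub_rVP[a ->] /sub_rVP[b ->]].
  exact: singularZ.
by rewrite polarZl polarZr singular_polar // !mulr0.
Qed.

Lemma totally_singular0 m : totally_singular (0 : 'M[F]_(m, n)).
Proof.
split=> [v|v w] /submx0null ->; first exact: singular0.
by move=> _; rewrite /polar !mul0mx mxE.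
Qed.

Lemma tisoP (A : 'M[F]_n) : tiso phi A <-> totally_singular A.
Proof.
rewrite /tiso; case E: phi => [M|s M|M].
- have -> : (A *m M *m A^T == 0) = (A *m polar_gram *m (map_mx form_aut A)^T == 0).
    by rewrite /polar_gram /form_aut E map_mx_idfun.
  split=> [/polar_orthoP oA|[_ /polar_orthoP //]]; split=> // v vA.
  by rewrite /singular E oA.
- have -> : (A *m M *m (map_mx s A)^T == 0) =
            (A *m polar_gram *m (map_mx form_aut A)^T == 0) by rewrite /polar_gram /form_aut E.
  split=> [/polar_orthoP oA|[_ /polar_orthoP //]]; split=> // v vA.
  by rewrite /singular E oA.
- have polarE v w : polar v w = (v *m (M + M^T) *m w^T) 0 0.
    by rewrite /polar /polar_gram /form_aut E map_mx_idfun.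
  split=> [/forallP Q0|[sA _]]; last first.
    by apply/forallP => v; apply/implyP => /sA; rewrite /singular E.
  have Qv0 v : (v <= A)%MS -> quadval M v = 0 by move=> vA; apply/eqP/(implyP (Q0 v)).
  split=> [v /Qv0 Qv|v w vA wA]; first by rewrite /singular E Qv.
  have := quadvalD M v w; rewrite !Qv0 ?addmx_sub // polarE.
  by rewrite !add0r => <-.
Qed.

Lemma dpXP x : x \in dpX phi ->
  [/\ <<x>>%MS = x, totally_singular x &
      forall B : 'M[F]_n, totally_singular B -> (x <= B)%MS -> (B <= x)%MS].
Proof.
rewrite inE => /and3P[/eqP gx /tisoP tsx /forallP maxx]; split=> // B tsB xB.
by apply: (implyP (maxx B)); rewrite xB andbT; apply/tisoP.
Qed.

Lemma dpX_singular_ortho x v : x \in dpX phi -> singular v ->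
  (forall a, (a <= x)%MS -> polar a v = 0) -> (v <= x)%MS.
Proof.
move=> /dpXP[_ tsx maxx] sv xv.
have tsxv : totally_singular (x + v)%MS.
  apply: totally_singular_adds (totally_singular_row sv) _ => // a b ax /sub_rVP[c ->].
  by rewrite polarZr xv // mulr0.
exact: submx_trans (addsmxSr _ _) (maxx _ tsxv (addsmxSl _ _)).
Qed.

Lemma rank_le_witt (A : 'M[F]_n) : totally_singular A -> (\rank A <= witt phi)%N.
Proof. by move/tisoP; apply: (leq_bigmax_cond (F := fun A => \rank A)). Qed.

Lemma witt_attained : exists2 W : 'M[F]_n, totally_singular W & \rank W = witt phi.
Proof.
have : (0 < #|[pred A : 'M[F]_n | tiso phi A]|)%N.
  by apply/card_gt0P; exists 0; rewrite inE; apply/tisoP/totally_singular0.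
move/(eq_bigmax_cond (fun A : 'M[F]_n => \rank A)) => [W tW wittE].
by exists W; [apply/tisoP|rewrite /witt wittE].
Qed.

Definition perpmx m (A : 'M[F]_(m, n)) : 'M[F]_n :=
  kermx (map_mx form_aut (A *m polar_gram)^T).

Lemma perpmxP m1 m2 (A : 'M[F]_(m1, n)) (B : 'M[F]_(m2, n)) :
  reflect (forall v w, (v <= A)%MS -> (w <= B)%MS -> polar v w = 0)
          (B <= perpmx A)%MS.
Proof.
rewrite sub_kermx -(map_mx_eq0 form_aut) map_mxM map_mx_form_autK -trmx_eq0.
by rewrite trmx_mul trmxK; apply: polar_orthoP.
Qed.

(* Both [\rank B - \rank (B :&: A^perp)] and [\rank A - \rank (A :&: B^perp)]
   are the rank of the pairing of [A] and [B] by [polar]. *)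
Lemma mxrank_cap_perpmx m1 m2 m3 (A : 'M[F]_(m1, n)) (B : 'M[F]_(m2, n))
    (D : 'M[F]_(m3, n)) :
  (D <= A)%MS -> (forall d b, (d <= D)%MS -> (b <= B)%MS -> polar d b = 0) ->
  (\rank B + \rank D <= \rank (B :&: perpmx A) + \rank A)%N.
Proof.
move=> DA DB.
have rkB := mxrank_mul_ker B (map_mx form_aut (A *m polar_gram)^T).
have rkA := mxrank_mul_ker A (polar_gram *m (map_mx form_aut B)^T).
have pairing : \rank (B *m map_mx form_aut (A *m polar_gram)^T) =
               \rank (A *m (polar_gram *m (map_mx form_aut B)^T)).
  by rewrite -(mxrank_map form_aut) map_mxM map_mx_form_autK -mxrank_tr
             trmx_mul trmxK mulmxA.
have /mxrankS rkD : (D <= A :&: kermx (polar_gram *m (map_mx form_aut B)^T))%MS.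
  by rewrite sub_capmx DA sub_kermx mulmxA; apply/polar_orthoP.
by rewrite /perpmx -rkB -rkA pairing -addnA addnCA !leq_add2l.
Qed.

(* Compare [x] with a totally singular [W] of rank [witt phi]: by maximality
   of [x], [W :&: x^perp] lies in [x]. *)
Lemma rank_dpX x : x \in dpX phi -> \rank x = witt phi.
Proof.
move=> Xx; have [_ tsx _] := dpXP Xx.
apply/eqP; rewrite eqn_leq rank_le_witt //=.
have [W [sW oW] <-] := witt_attained.
have /mxrankS ortho_cap : (W :&: perpmx x <= W :&: x)%MS.
  rewrite sub_capmx capmxSl /=; apply/row_subP => i.
  have Wi : (row i (W :&: perpmx x) <= W)%MS by rewrite (submx_trans (row_sub _ _)) ?capmxSl.
  apply: dpX_singular_ortho Xx (sW _ Wi) _ => a ax.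
  by move/perpmxP: (capmxSr W (perpmx x)); apply; rewrite ?row_sub.
have := @mxrank_cap_perpmx _ _ _ x W (W :&: x)%MS (capmxSr _ _).
have oWx d b : (d <= W :&: x)%MS -> (b <= W)%MS -> polar d b = 0.
  by move=> dWx bW; apply: oW; rewrite ?(submx_trans dWx (capmxSl _ _)).
move=> /(_ oWx); lia.
Qed.

Lemma rank_cap_le_witt (x y : 'M[F]_n) : x \in dpX phi -> (\rank (x :&: y) <= witt phi)%N.
Proof. by move=> Xx; rewrite -(rank_dpX Xx) mxrankS ?capmxSl. Qed.

(* The triangle inequality for [dpdist], with its equality case. *)
Lemma rank_cap_leqif (u z x : 'M[F]_n) : z \in dpX phi ->
  (\rank (u :&: z) + \rank (z :&: x) <= witt phi + \rank (u :&: x)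
     ?= iff (u :&: x <= z)%MS && (z <= (u :&: z) + (z :&: x))%MS)%N.
Proof.
move=> Xz; rewrite -(mxrank_sum_cap (u :&: z)%MS (z :&: x)%MS) -(rank_dpX Xz) andbC.
apply: leqif_add; first by apply: mxrank_leqif_sup; rewrite addsmx_sub capmxSr capmxSl.
have sub_ux : ((u :&: z) :&: (z :&: x) <= u :&: x)%MS.
  rewrite sub_capmx (submx_trans (capmxSl _ _) (capmxSl _ _)).
  exact: submx_trans (capmxSr _ _) (capmxSr _ _).
have -> : (u :&: x <= z)%MS = (u :&: x <= (u :&: z) :&: (z :&: x))%MS.
  by rewrite !sub_capmx capmxSl capmxSr !andbT andbb.
exact: mxrank_leqif_sup.
Qed.

Definition between (u z x : 'M[F]_n) :=
  (dpdist phi u z + dpdist phi z x == dpdist phi u x)%N.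

Lemma betweenE (u z x : 'M[F]_n) : u \in dpX phi -> z \in dpX phi -> x \in dpX phi ->
  between u z x = (u :&: x <= z)%MS && (z <= (u :&: z) + (z :&: x))%MS.
Proof.
move=> Xu Xz Xx; have [le_rk <-] := rank_cap_leqif u x Xz.
have := rank_cap_le_witt z Xu; have := rank_cap_le_witt x Xz.
have := rank_cap_le_witt x Xu; rewrite /between /dpdist.
by move=> *; apply/eqP/eqP; lia.
Qed.

Lemma dpdist_triangle (u z x : 'M[F]_n) :
  u \in dpX phi -> z \in dpX phi -> x \in dpX phi ->
  (dpdist phi u x <= dpdist phi u z + dpdist phi z x)%N.
Proof.
move=> Xu Xz Xx; have [le_rk _] := rank_cap_leqif u x Xz.
have := rank_cap_le_witt z Xu; have := rank_cap_le_witt x Xz.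
have := rank_cap_le_witt x Xu; rewrite /dpdist; lia.
Qed.

Lemma between_trans u z z3 x :
  u \in dpX phi -> z \in dpX phi -> z3 \in dpX phi -> x \in dpX phi ->
  between u z z3 -> between u z3 x -> between u z x.
Proof.
move=> Xu Xz X3 Xx /eqP uz3 /eqP u3x.
rewrite /between eqn_leq dpdist_triangle // andbT.
by rewrite -u3x -uz3 -addnA leq_add2l dpdist_triangle.
Qed.

(* When [x] lies beyond both [z] and [z'] as seen from [u], this is the only
   vertex at distance [witt phi - \rank (u :&: z :&: z')] from [u] lying
   beyond [z] and [z'] and before [x]. *)
Definition midpoint (u z z' x : 'M[F]_n) : 'M[F]_n :=
  let A := (u :&: z :&: (u :&: z'))%MS in <<(A + x :&: perpmx A)%MS>>%MS.

Section Midpoint.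
Variables u z z' x : 'M[F]_n.
Hypotheses (Xu : u \in dpX phi) (Xz : z \in dpX phi) (Xz' : z' \in dpX phi).
Hypotheses (Xx : x \in dpX phi) (uzx : between u z x) (uz'x : between u z' x).

Let A := (u :&: z :&: (u :&: z'))%MS.
Let Z := (A + x :&: perpmx A)%MS.

Let midpointE : midpoint u z z' x = <<Z>>%MS. Proof. by []. Qed.

Let ux_sub_A : (u :&: x <= A)%MS.
Proof.
move: uzx uz'x; rewrite !betweenE // => /andP[ux_z _] /andP[ux_z' _].
by rewrite !sub_capmx capmxSl ux_z ux_z'.
Qed.

Let A_sub_u : (A <= u)%MS.
Proof. exact: submx_trans (capmxSl _ _) (capmxSl _ _). Qed.

Let totally_singular_Z : totally_singular Z.
Proof.
have [_ tsu _] := dpXP Xu; have [_ tsx _] := dpXP Xx.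
apply: totally_singular_adds; first exact: totally_singularS A_sub_u tsu.
  exact: totally_singularS (capmxSl _ _) tsx.
by move=> a c aA cC; move/perpmxP: (capmxSr x (perpmx A)); apply.
Qed.

Let rank_Z : \rank Z = witt phi.
Proof.
apply/eqP; rewrite eqn_leq (rank_le_witt totally_singular_Z) /=.
have [_ [_ ox] _] := dpXP Xx.
have oAx d b : (d <= A :&: x)%MS -> (b <= x)%MS -> polar d b = 0.
  by move=> dAx; apply: ox; apply: submx_trans dAx (capmxSr _ _).
have := mxrank_cap_perpmx (capmxSl A x) oAx.
have := mxrank_sum_cap A (x :&: perpmx A)%MS.
have /mxrankS : (A :&: (x :&: perpmx A) <= A :&: x)%MS.
  by rewrite sub_capmx capmxSl (submx_trans (capmxSr _ _) (capmxSl _ _)).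
rewrite (rank_dpX Xx) /Z => *; lia.
Qed.

Lemma midpoint_dpX : midpoint u z z' x \in dpX phi.
Proof.
rewrite midpointE inE genmx_id eqxx /=; apply/andP; split.
  by apply/tisoP; apply: totally_singularS totally_singular_Z; rewrite genmxE.
apply/forallP => B; apply/implyP => /andP[/tisoP tsB sZB].
by apply: rank_ge_sub sZB _; rewrite genmxE rank_Z rank_le_witt.
Qed.

Let cap_midpoint : (u :&: midpoint u z z' x :=: A)%MS.
Proof.
rewrite midpointE; apply: eqmx_trans (cap_eqmx (eqmx_refl u) (genmxE Z)) _.
apply/eqmxP/andP; split.
  rewrite capmxC /Z -(matrix_modl _ A_sub_u) addsmx_sub submx_refl /=.
  apply: submx_trans ux_sub_A; rewrite sub_capmx capmxSr /=.
  exact: submx_trans (capmxSl _ _) (capmxSl _ _).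
by rewrite sub_capmx A_sub_u addsmxSl.
Qed.

Lemma dpdist_midpoint : dpdist phi u (midpoint u z z' x) = (witt phi - \rank A)%N.
Proof. by rewrite /dpdist cap_midpoint. Qed.

Lemma between_midpoint y : y \in dpX phi -> (A <= u :&: y)%MS ->
  between u y x -> between u y (midpoint u z z' x).
Proof.
move=> Xy Auy; rewrite !betweenE ?midpoint_dpX // => /andP[_ y_sub].
rewrite cap_midpoint (submx_trans Auy (capmxSr _ _)) /=.
apply: submx_trans y_sub (addsmxS (submx_refl _) _).
rewrite midpointE (cap_eqmx (eqmx_refl y) (genmxE Z)) sub_capmx capmxSl /=.
apply: submx_trans (addsmxSr A _); rewrite sub_capmx capmxSr /=.
have [_ [_ oy] _] := dpXP Xy; apply/perpmxP => v w vA wyx; apply: oy.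
  exact: submx_trans vA (submx_trans Auy (capmxSr _ _)).
exact: submx_trans wyx (capmxSl _ _).
Qed.

Lemma midpoint_between : between u (midpoint u z z' x) x.
Proof.
rewrite betweenE ?midpoint_dpX // midpointE; apply/andP; split.
  by rewrite genmxE; apply: submx_trans ux_sub_A (addsmxSl _ _).
rewrite genmxE addsmx_sub; apply/andP; split.
  by apply: submx_trans (addsmxSl _ _); rewrite cap_midpoint.
apply: submx_trans (addsmxSr _ _).
by rewrite (cap_eqmx (genmxE Z) (eqmx_refl x)) sub_capmx addsmxSr capmxSl.
Qed.

Lemma midpoint_unique z3 : z3 \in dpX phi -> dpdist phi u z3 = (witt phi - \rank A)%N ->
  between u z z3 -> between u z' z3 -> between u z3 x -> z3 = midpoint u z z' x.
Proof.
move=> X3 d3; rewrite !betweenE // => /andP[uz3_z _] /andP[uz3_z' _] /andP[_ z3_sub].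
have u3_A : (u :&: z3 <= A)%MS by rewrite !sub_capmx capmxSl uz3_z uz3_z'.
have A_u3 : (A <= u :&: z3)%MS.
  apply: rank_ge_sub u3_A _; move: d3; rewrite /dpdist.
  have := rank_cap_le_witt z3 Xu; have := mxrankS A_sub_u; rewrite (rank_dpX Xu); lia.
have z3Z : (z3 <= Z)%MS.
  apply: submx_trans z3_sub (addsmxS u3_A _).
  rewrite sub_capmx capmxSr /=; apply/perpmxP => v w vA wz3.
  have [_ [_ o3] _] := dpXP X3; apply: o3; last exact: submx_trans wz3 (capmxSl _ _).
  exact: submx_trans vA (submx_trans A_u3 (capmxSr _ _)).
have Zz3 : (Z <= z3)%MS by apply: rank_ge_sub z3Z _; rewrite rank_Z (rank_dpX X3).
have [<- _ _] := dpXP X3; rewrite midpointE; apply: eq_genmx.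
by apply/eqmxP; rewrite z3Z Zz3.
Qed.

End Midpoint.
End DualPolarGeometry.

Definition mulf (T : finType) (R : comNzRingType) (g f : {ffun T -> R^o}) : {ffun T -> R^o} :=
  [ffun x => g x * f x].

Lemma mulfE (T : finType) (R : comNzRingType) (g f : {ffun T -> R^o}) x :
  mulf g f x = g x * f x.
Proof. exact: ffunE. Qed.

Lemma mulfC (T : finType) (R : comNzRingType) (f g : {ffun T -> R^o}) : mulf f g = mulf g f.
Proof. by apply/ffunP => x; rewrite !mulfE mulrC. Qed.

Lemma mulf_is_linear (T : finType) (R : comNzRingType) (g : {ffun T -> R^o}) : linear (mulf g).
Proof. by move=> a f h; apply/ffunP => x; rewrite !ffunE mulrDr mulrCA. Qed.

HB.instance Definition _ (T : finType) (R : comNzRingType) (g : {ffun T -> R^o}) :=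
  GRing.isLinear.Build R {ffun T -> R^o} {ffun T -> R^o} _ (mulf g) (mulf_is_linear g).

Lemma restr_is_linear (F : finFieldType) n (R : realFieldType) (S : {set 'M[F]_n}) :
  linear (@restr F n R S).
Proof.
move=> a f h; apply/ffunP => x; rewrite !ffunE.
by case: (x \in S); rewrite ?scaler0 ?addr0.
Qed.

HB.instance Definition _ (F : finFieldType) n (R : realFieldType) (S : {set 'M[F]_n}) :=
  GRing.isLinear.Build R (fun_on F n R) (fun_on F n R) _ (@restr F n R S) (restr_is_linear S).

Section HomProducts.
Variables (F : finFieldType) (n : nat) (R : realFieldType) (phi : dpform F n).
Hypothesis phi_nondeg : nondeg_form phi.
Local Notation fun_on := (fun_on F n R).
Local Notation fz := (fz R phi).

Definition Hom_upto (u : 'M[F]_n) (j : nat) : {vspace fun_on} :=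
  (\sum_(i < j.+1) HomX R phi u i)%VS.

Lemma fzE u z x : fz u z x = ((x \in dpX phi) && between phi u z x)%:R.
Proof. by rewrite ffunE; case: ifP. Qed.

Lemma fz_HomX u z j : z \in shell phi u j -> fz u z \in HomX R phi u j.
Proof. by move=> zj; apply/memv_span/map_f; rewrite mem_enum. Qed.

Lemma HomX_sub_upto u i j : (i <= j)%N -> (HomX R phi u i <= Hom_upto u j)%VS.
Proof. by rewrite -ltnS => lt_ij; apply: (sumv_sup (Ordinal lt_ij)). Qed.

Lemma mulf_fz u z z' : u \in dpX phi -> z \in dpX phi -> z' \in dpX phi ->
  mulf (fz u z) (fz u z') =
  \sum_(z3 in [set z3 in shell phi u (witt phi - \rank (u :&: z :&: (u :&: z')))
                 | between phi u z z3 && between phi u z' z3]) fz u z3.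
Proof.
move=> Xu Xz Xz'; apply/ffunP => x; rewrite ffunE sum_ffunE !fzE -natrM mulnb.
case Xx: (x \in dpX phi); rewrite ?andTb ?andFb; last first.
  by rewrite big1 // => z3 _; rewrite fzE Xx.
have [/andP[uzx uz'x]|not_both] := boolP (between phi u z x && between phi u z' x).
  have Xm : midpoint phi u z z' x \in dpX phi by apply: midpoint_dpX.
  rewrite (bigD1 (midpoint phi u z z' x)); last first.
    rewrite inE /shell inE Xm dpdist_midpoint // eqxx !andTb.
    by apply/andP; split; apply: between_midpoint; rewrite ?capmxSl ?capmxSr.
  rewrite fzE Xx midpoint_between // big1 => [|z3 /andP[]]; first by rewrite Monoid.mulm1.
  rewrite inE /shell inE => /andP[/andP[X3 /eqP d3] /andP[uzz3 uz'z3]] z3m.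
  rewrite fzE Xx andTb.
  have [z3x|//] := boolP (between phi u z3 x).
  by rewrite (midpoint_unique phi_nondeg Xu Xz Xz' Xx uzx uz'x X3 d3) ?eqxx in z3m.
rewrite big1 // => z3.
rewrite inE /shell inE => /andP[/andP[X3 _] /andP[uzz3 uz'z3]].
rewrite fzE Xx andTb; have [z3x|//] := boolP (between phi u z3 x).
case/negP: not_both; apply/andP; split.
  exact: (between_trans phi_nondeg Xu Xz X3 Xx uzz3 z3x).
exact: (between_trans phi_nondeg Xu Xz' X3 Xx uz'z3 z3x).
Qed.

Lemma mulf_fz_Hom_upto u z z' i j m :
  u \in dpX phi -> z \in shell phi u i -> z' \in shell phi u j -> (i + j <= m)%N ->
  mulf (fz u z) (fz u z') \in Hom_upto u m.
Proof.
rewrite /shell => Xu /setIdP[Xz /eqP <-] /setIdP[Xz' /eqP <-] le_m.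
rewrite mulf_fz //; apply: memv_suml => z3; rewrite inE => /andP[z3_shell _].
apply: subvP (HomX_sub_upto _ _) _ (fz_HomX z3_shell).
have := mxrank_sum_cap (u :&: z)%MS (u :&: z')%MS.
have /mxrankS : ((u :&: z) + (u :&: z') <= u)%MS by rewrite addsmx_sub !capmxSl.
have := rank_cap_le_witt phi_nondeg z Xu; have := rank_cap_le_witt phi_nondeg z' Xu.
rewrite (rank_dpX phi_nondeg Xu); move: le_m; rewrite /dpdist; lia.
Qed.

Lemma Hom_upto_sub_preim u j (L : 'End(fun_on)) (W : {vspace fun_on}) :
  (forall i z, (i <= j)%N -> z \in shell phi u i -> L (fz u z) \in W) ->
  (Hom_upto u j <= L @^-1: W)%VS.
Proof.
move=> LW; apply/subv_sumP => i _; apply/span_subvP => _ /mapP[z zi ->].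
by rewrite -memv_preim; apply: LW; [exact: ltn_ord i|rewrite -mem_enum].
Qed.

Lemma mulf_Hom_upto u a b m h h' : u \in dpX phi -> (a + b <= m)%N ->
  h \in Hom_upto u a -> h' \in Hom_upto u b -> mulf h h' \in Hom_upto u m.
Proof.
move=> Xu le_m hH h'H; rewrite -(lfunE (mulf h)) memv_preim.
apply: subvP h'H; apply: Hom_upto_sub_preim => j z' le_jb z'j; rewrite lfunE /= mulfC.
rewrite -(lfunE (mulf (fz u z'))) memv_preim.
apply: subvP hH; apply: Hom_upto_sub_preim => i z le_ia zi; rewrite lfunE /=.
by apply: mulf_fz_Hom_upto z'j zi _; lia.
Qed.

End HomProducts.

Section DesignBound.
Variables (F : finFieldType) (n : nat) (R : realFieldType) (phi : dpform F n).
Hypothesis phi_nondeg : nondeg_form phi.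
Local Notation fun_on := (fun_on F n R).

Definition delta (y : 'M[F]_n) : fun_on := [ffun x => (x == y)%:R].

Lemma restr_span_delta (Y : {set 'M[F]_n}) (f : fun_on) :
  restr Y f \in <<[seq delta y | y <- enum Y]>>%VS.
Proof.
have -> : restr Y f = \sum_(y <- enum Y) f y *: delta y.
  apply/ffunP => x; rewrite ffunE sum_ffunE big_enum /=.
  under eq_bigr do rewrite !ffunE.
  case: ifP => [xY|xNY].
    rewrite (bigD1 x) //= big1 ?eqxx ?addr0 => [|y /andP[_ y_x]].
      by rewrite /= -[_ *: _]/(_ * _) mulr1.
    by rewrite eq_sym (negPf y_x) /= -[_ *: _]/(_ * _) mulr0.
  rewrite big1 // => y yY.
  have /negPf -> : x != y by apply: contraFneq xNY => ->.
  by rewrite /= -[_ *: _]/(_ * _) mulr0.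
by rewrite big_seq; apply: memv_suml => y yY; apply/memvZ/memv_span/map_f.
Qed.

Lemma dim_le_card_restr_inj (V : {vspace fun_on}) (Y : {set 'M[F]_n}) :
  (forall g, g \in V -> restr Y g = 0 -> g = 0) -> (\dim V <= #|Y|)%N.
Proof.
move=> restrY_inj; have ker0 : (V :&: lker (linfun (@restr F n R Y)))%VS = 0%VS.
  apply/eqP; rewrite -subv0; apply/subvP => g; rewrite memv_cap memv_ker lfunE.
  by case/andP=> gV /eqP /(restrY_inj g gV) ->; rewrite memv0.
have /dimvS le_img : (linfun (@restr F n R Y) @: V <= <<[seq delta y | y <- enum Y]>>)%VS.
  by apply/subvP => _ /memv_imgP[f _ ->]; rewrite lfunE restr_span_delta.
rewrite -(limg_dim_eq ker0) (leq_trans le_img) // (leq_trans (dim_span _)) //.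
by rewrite size_map -cardE.
Qed.

Lemma restr_restr (S Y : {set 'M[F]_n}) (f : fun_on) :
  Y \subset S -> restr Y (restr S f) = restr Y f.
Proof.
by move=> YS; apply/ffunP => x; rewrite !ffunE; case: ifP => // /(subsetP YS) ->.
Qed.

Definition shell_union (u : 'M[F]_n) (Y : {set 'M[F]_n}) : {set 'M[F]_n} :=
  [set x in dpX phi | [exists y in Y, dpdist phi u y == dpdist phi u x]].

Lemma sub_shell_union u (Y : {set 'M[F]_n}) : Y \subset dpX phi -> Y \subset shell_union u Y.
Proof.
move=> YX; apply/subsetP => y yY; rewrite inE (subsetP YX) //=.
by apply/existsP; exists y; rewrite yY eqxx.
Qed.

Lemma HomS_upto_restr u S e :
  (\sum_(j < e.+1) HomS R phi u S j <= linfun (@restr F n R S) @: Hom_upto R phi u e)%VS.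
Proof.
apply/subv_sumP => j _; apply/span_subvP => _ /mapP[z zj ->].
rewrite -lfunE; apply/memv_img/(subvP (HomX_sub_upto _ _ _ (leq_ord j))).
by apply: fz_HomX; rewrite -mem_enum.
Qed.

Definition relative_design (u : 'M[F]_n) (t : nat) (Y : {set 'M[F]_n})
    (w : 'M[F]_n -> R) : Prop :=
  forall f : fun_on, f \in Hom_upto R phi u t ->
    \sum_(r < (witt phi).+1 | [exists y in Y, dpdist phi u y == r])
       ((\sum_(y in Y | dpdist phi u y == r) w y) / #|shell phi u r|%:R)
         * \sum_(x in shell phi u r) f x
    = \sum_(y in Y) w y * f y.

Lemma shell_weight_gt0 u (Y : {set 'M[F]_n}) (w : 'M[F]_n -> R) r :
  Y \subset dpX phi -> {in Y, forall y, 0 < w y} ->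
  [exists y in Y, dpdist phi u y == r] ->
  0 < (\sum_(y in Y | dpdist phi u y == r) w y) / #|shell phi u r|%:R.
Proof.
move=> YX w_gt0 /existsP[y0 /andP[y0Y /eqP d0]]; apply: divr_gt0.
  rewrite (bigD1 y0) /=; last by rewrite y0Y d0 eqxx.
  rewrite ltr_pwDl ?w_gt0 ?sumr_ge0 // => y /andP[/andP[yY _] _].
  exact/ltW/w_gt0.
rewrite ltr0n; apply/card_gt0P; exists y0.
by rewrite inE (subsetP YX) // d0 eqxx.
Qed.

(* Applied to [h^2], the design identity equates a sum of nonnegative terms,
   one per shell met by [Y], each with a positive weight, to
   [\sum_(y in Y) w y * h y ^+ 2 = 0]. *)
Lemma design_vanishing u e (Y : {set 'M[F]_n}) (w : 'M[F]_n -> R) (h : fun_on) :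
  u \in dpX phi -> Y \subset dpX phi -> {in Y, forall y, 0 < w y} ->
  relative_design u (2 * e) Y w -> h \in Hom_upto R phi u e ->
  restr Y h = 0 -> restr (shell_union u Y) h = 0.
Proof.
move=> Xu YX w_gt0 design hH hY0.
have hY y : y \in Y -> h y = 0.
  by move=> yY; move/ffunP/(_ y): hY0; rewrite !ffunE yY.
have sq_ge0 x : 0 <= mulf h h x by rewrite mulfE -expr2 sqr_ge0.
have le_2e : (e + e <= 2 * e)%N by rewrite mul2n addnn.
have := design _ (mulf_Hom_upto phi_nondeg Xu le_2e hH hH).
rewrite [X in _ = X]big1 => [|y yY]; last by rewrite mulfE hY ?mulr0.
move=> /psumr_eq0P shells0.
have {}shells0 := shells0 (fun r met_r => mulr_ge0
  (ltW (shell_weight_gt0 YX w_gt0 met_r)) (sumr_ge0 _ (fun x _ => sq_ge0 x))).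
apply/ffunP => x; rewrite !ffunE.
case: ifP => // /setIdP[Xx met]; apply/eqP; rewrite -[h x == 0]orbb -mulf_eq0 -mulfE.
have ltx : (dpdist phi u x < (witt phi).+1)%N by rewrite ltnS leq_subr.
have met_r : [exists y in Y, dpdist phi u y == Ordinal ltx] by [].
have /eqP := shells0 _ met_r.
rewrite mulf_eq0 gt_eqF ?shell_weight_gt0 //= => /eqP.
move=> /psumr_eq0P sq0.
by apply/eqP/(sq0 (fun y _ => sq_ge0 y)); rewrite inE Xx eqxx.
Qed.

End DesignBound.

Theorem theoremA6 (F : finFieldType) (n : nat) (phi : dpform F n)
  (R : realFieldType) (u0 : 'M[F]_n) (e : nat)
  (Y : {set 'M[F]_n}) (w : 'M[F]_n -> R) :
  nondeg_form phi ->
  u0 \in dpX phi ->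
  Y \subset dpX phi ->
  (forall y, y \in Y -> 0 < w y) ->
  (forall f : fun_on F n R,
     f \in (\sum_(j < (2 * e).+1) HomX R phi u0 j)%VS ->
     \sum_(r < (witt phi).+1 | [exists y in Y, dpdist phi u0 y == r])
        ((\sum_(y in Y | dpdist phi u0 y == r) w y) / #|shell phi u0 r|%:R)
          * \sum_(x in shell phi u0 r) f x
     = \sum_(y in Y) w y * f y) ->
  let S := [set x in dpX phi | [exists y in Y, dpdist phi u0 y == dpdist phi u0 x]] in
  (\dim (\sum_(j < e.+1) HomS R phi u0 S j)%VS <= #|Y|)%N.
Proof.
move=> phi_nondeg Xu0 YX w_gt0 design; cbv zeta.
apply: dim_le_card_restr_inj => _ /(subvP (HomS_upto_restr _ _ _ _ _)) /memv_imgP[h hH ->].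
rewrite lfunE /= restr_restr ?sub_shell_union // => hY0.
exact (design_vanishing phi_nondeg Xu0 YX w_gt0 design hH hY0).
Qed.
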